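(* Let $n\ge 2$, $m\ge 0$, $1\le k\le n-1$. Let $(b,e)=(2k,n+k)$ or $(b,e)=(2k-1,n+k-1)$, and let $G$ be the group with presentation $$\langle \alpha,\beta\mid [(\alpha\beta^{n-k+1}\alpha\beta^{-n+k})^{e}(\alpha\beta)^{-b+1}\beta^{-n+k-1}]^{m+1}=\alpha\beta^{n-k+1}\alpha\beta^{-n+k}\rangle.$$ Let $Q$ be any quotient group of $G$ (in particular, the fundamental group of any Dehn surgery on the corresponding knot), with $\alpha,\beta$ also denoting their images in $Q$. For any homomorphism $\Phi:Q\to\mathrm{Homeo}^+(\mathbb{R})$, if $\Phi(\alpha)(t)>t$ for all $t\in\mathbb{R}$, then $\Phi(\beta)(t)\ge t$ for all $t\in\mathbb{R}$.
   Context: $\mathrm{Homeo}^+(\mathbb{R})$ is the group of order-preserving homeomorphisms of $\mathbb{R}$. For $(b,e)=(2k,n+k)$, $G$ is the knot group of the closure of $(\sigma_1\cdots\sigma_{2k})(\sigma_1\cdots\sigma_{2n})^{2n-1+m(2n+1)}$ on $2n+1$ strands; for $(b,e)=(2k-1,n+k-1)$, $G$ is the knot group of the closure of $(\sigma_1\cdots\sigma_{2k-1})(\sigma_1\cdots\sigma_{2n-1})^{2n-2+2mn}$ on $2n$ strands. *)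

From Stdlib Require Import Reals ZArith.
Open Scope R_scope.

Record Group := {
  carrier :> Type;
  gmul : carrier -> carrier -> carrier;
  gone : carrier;
  ginv : carrier -> carrier;
  gmul_assoc : forall x y z, gmul x (gmul y z) = gmul (gmul x y) z;
  gmul_1l : forall x, gmul gone x = x;
  gmul_1r : forall x, gmul x gone = x;
  gmul_Vl : forall x, gmul (ginv x) x = gone;
  gmul_Vr : forall x, gmul x (ginv x) = gone
}.

Arguments gmul {g}.
Arguments gone {g}.
Arguments ginv {g}.

Fixpoint gnpow {Q : Group} (x : Q) (n : nat) : Q :=
  match n with O => gone | S n' => gmul x (gnpow x n') end.

Definition gzpow {Q : Group} (x : Q) (z : Z) : Q :=
  match z with
  | Z0 => gone
  | Zpos p => gnpow x (Pos.to_nat p)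
  | Zneg p => ginv (gnpow x (Pos.to_nat p))
  end.

Inductive in_gen {Q : Group} (a b : Q) : Q -> Prop :=
  | gen_a : in_gen a b a
  | gen_b : in_gen a b b
  | gen_one : in_gen a b gone
  | gen_mul : forall x y, in_gen a b x -> in_gen a b y -> in_gen a b (gmul x y)
  | gen_inv : forall x, in_gen a b x -> in_gen a b (ginv x).

Definition generated_by {Q : Group} (a b : Q) : Prop := forall x : Q, in_gen a b x.

Definition relU {Q : Group} (a b : Q) (n k : nat) : Q :=
  gmul a (gmul (gzpow b (Z.of_nat n - Z.of_nat k + 1))
    (gmul a (gzpow b (- Z.of_nat n + Z.of_nat k)))).

Definition relW {Q : Group} (a b : Q) (n k bb e : nat) : Q :=
  gmul (gzpow (relU a b n k) (Z.of_nat e))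
    (gmul (gzpow (gmul a b) (- Z.of_nat bb + 1))
      (gzpow b (- Z.of_nat n + Z.of_nat k - 1))).

Definition satisfies_relation {Q : Group} (a b : Q) (n m k bb e : nat) : Prop :=
  gzpow (relW a b n k bb e) (Z.of_nat m + 1) = relU a b n k.

Definition homeo_plus (f : R -> R) : Prop :=
  (forall x y, x < y -> f x < f y) /\ continuity f /\ (forall y, exists x, f x = y).

Definition hom_to_homeo_plus {Q : Group} (Phi : Q -> R -> R) : Prop :=
  (forall q, homeo_plus (Phi q)) /\
  (forall x y t, Phi (gmul x y) t = Phi x (Phi y t)).

(* The pointwise order on Homeo+(R) is invariant under composition on both
   sides.  Let p = n - k, let U be the right-hand side of the relation and W
   the bracketed element, so W^(m+1) = U.  With Y = beta^(p+1) (alpha beta)^(b-1)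
   we have W Y = U^e; as W commutes with U, hence with Y, raising to the power
   m+1 gives U Y^(m+1) = U^(e(m+1)).  Since alpha > id, U dominates both beta
   and alpha beta, so Y = beta R with R <= U^(e-1).  Bounding all factors of
   U Y^(m+1) except the single beta yields U^(e(m+1)) <= U beta U^(e(m+1)-1),
   and cancelling the outer factors leaves id <= beta. *)
From Stdlib Require Import Reals ZArith Lra Lia.
Open Scope R_scope.

Arguments gmul_assoc {g}.
Arguments gmul_1l {g}.
Arguments gmul_1r {g}.
Arguments gmul_Vl {g}.
Arguments gmul_Vr {g}.

Section GroupFacts.
Variable Q : Group.
Implicit Types g h x y u w : Q.

Lemma gmul_cancel_l g x y : gmul g x = gmul g y -> x = y.
Proof.
  intros E.
  rewrite <- (gmul_1l x), <- (gmul_1l y), <- (gmul_Vl g), <- !gmul_assoc, E.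
  reflexivity.
Qed.

Lemma ginv_one : ginv (gone : Q) = gone.
Proof. rewrite <- (gmul_1l (ginv gone)). apply gmul_Vr. Qed.

Lemma gnpow_add x i j : gnpow x (i + j) = gmul (gnpow x i) (gnpow x j).
Proof.
  induction i as [|i IH]; simpl.
  - symmetry; apply gmul_1l.
  - rewrite IH; apply gmul_assoc.
Qed.

Lemma gnpow_mul x i j : gnpow x (i * j) = gnpow (gnpow x i) j.
Proof.
  induction j as [|j IH]; simpl.
  - rewrite Nat.mul_0_r; reflexivity.
  - rewrite <- IH, <- gnpow_add; f_equal; lia.
Qed.

Lemma gzpow_of_nat x j : gzpow x (Z.of_nat j) = gnpow x j.
Proof. destruct j as [|j]; simpl; [reflexivity|]. rewrite SuccNat2Pos.id_succ; reflexivity. Qed.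

Lemma gzpow_opp_of_nat x j : gzpow x (- Z.of_nat j) = ginv (gnpow x j).
Proof.
  destruct j as [|j]; simpl; [symmetry; apply ginv_one|].
  rewrite SuccNat2Pos.id_succ; reflexivity.
Qed.

Definition gcommute x y : Prop := gmul x y = gmul y x.

Lemma gcommute_npow x y j : gcommute x y -> gcommute x (gnpow y j).
Proof.
  unfold gcommute; intros C; induction j as [|j IH]; simpl.
  - rewrite gmul_1l, gmul_1r; reflexivity.
  - rewrite gmul_assoc, C, <- gmul_assoc, IH, gmul_assoc; reflexivity.
Qed.

Lemma gnpow_mul_commute x y j :
  gcommute x y -> gnpow (gmul x y) j = gmul (gnpow x j) (gnpow y j).
Proof.
  intros C; induction j as [|j IH]; simpl.
  - symmetry; apply gmul_1l.
  - assert (Cj : gcommute y (gnpow x j)) by (apply gcommute_npow; symmetry; exact C).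
    rewrite IH, <- !gmul_assoc, (gmul_assoc y), Cj, <- gmul_assoc; reflexivity.
Qed.

Lemma mul_npow_of_root u w y e m :
  gnpow w (S m) = u -> gmul w y = gnpow u e ->
  gmul u (gnpow y (S m)) = gnpow u (e * S m).
Proof.
  intros Hu Hy.
  assert (Cwu : gcommute w u)
    by (rewrite <- Hu; apply gcommute_npow; reflexivity).
  assert (Cwy : gcommute w y).
  { apply (gmul_cancel_l w); unfold gcommute.
    rewrite Hy, (gmul_assoc w y w), Hy.
    apply gcommute_npow; exact Cwu. }
  rewrite gnpow_mul, <- Hy, gnpow_mul_commute, Hu by exact Cwy.
  reflexivity.
Qed.

End GroupFacts.

Definition dominated {Q : Group} (Phi : Q -> R -> R) (x y : Q) : Prop :=
  forall t, Phi x t <= Phi y t.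

Section PointwiseOrder.
Variables (Q : Group) (Phi : Q -> R -> R).
Hypothesis Phi_incr : forall x s t, s < t -> Phi x s < Phi x t.
Hypothesis Phi_mul : forall x y t, Phi (gmul x y) t = Phi x (Phi y t).
Implicit Types a b g h r u x y : Q.

Lemma Phi_le x s t : s <= t -> Phi x s <= Phi x t.
Proof. intros [lt|eq]; [left; apply Phi_incr; exact lt | right; subst; reflexivity]. Qed.

Lemma Phi_one t : Phi gone t = t.
Proof.
  assert (E : Phi gone (Phi gone t) = Phi gone t)
    by (rewrite <- Phi_mul, gmul_1l; reflexivity).
  destruct (Rtotal_order (Phi gone t) t) as [lt|[eq|gt]]; [|exact eq|];
    [apply (Phi_incr gone) in lt | apply (Phi_incr gone) in gt]; lra.
Qed.

Lemma Phi_invK g s : Phi (ginv g) (Phi g s) = s.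
Proof. rewrite <- Phi_mul, gmul_Vl; apply Phi_one. Qed.

Lemma Phi_Kinv g s : Phi g (Phi (ginv g) s) = s.
Proof. rewrite <- Phi_mul, gmul_Vr; apply Phi_one. Qed.

Lemma dominated_one_l x : dominated Phi gone x <-> forall t, t <= Phi x t.
Proof.
  unfold dominated; split; intros H t; [rewrite <- (Phi_one t) at 1 | rewrite Phi_one]; apply H.
Qed.

Lemma dominated_refl x : dominated Phi x x.
Proof. intros t; right; reflexivity. Qed.

Lemma dominated_mul x x' y y' :
  dominated Phi x y -> dominated Phi x' y' -> dominated Phi (gmul x x') (gmul y y').
Proof.
  intros H H' t; rewrite !Phi_mul.
  eapply Rle_trans; [apply Phi_le, H' | apply H].
Qed.

Lemma dominated_npow x y j : dominated Phi x y -> dominated Phi (gnpow x j) (gnpow y j).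
Proof.
  intros H; induction j as [|j IH]; simpl.
  - apply dominated_refl.
  - apply dominated_mul; assumption.
Qed.

Lemma dominated_mul2l g x y : dominated Phi (gmul g x) (gmul g y) -> dominated Phi x y.
Proof.
  intros H t; rewrite <- (Phi_invK g (Phi x t)), <- (Phi_invK g (Phi y t)).
  rewrite <- (Phi_mul g x), <- (Phi_mul g y).
  apply Phi_le, H.
Qed.

Lemma dominated_mul2r h x y : dominated Phi (gmul x h) (gmul y h) -> dominated Phi x y.
Proof.
  intros H t; rewrite <- (Phi_Kinv h t), <- (Phi_mul x h), <- (Phi_mul y h); apply H.
Qed.

Lemma relator_dominates a b p :
  dominated Phi gone a ->
  let u := gmul a (gmul (gnpow b (S p)) (gmul a (ginv (gnpow b p)))) in
  dominated Phi b u /\ dominated Phi (gmul a b) u.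
Proof.
  intros Ha u.
  set (c := gmul (gnpow b p) (gmul a (ginv (gnpow b p)))).
  assert (Hc : dominated Phi gone c).
  { rewrite <- (gmul_Vr (gnpow b p)), <- (gmul_1l (ginv (gnpow b p))) at 1.
    apply dominated_mul; [apply dominated_refl|].
    apply dominated_mul; [exact Ha | apply dominated_refl]. }
  assert (Eu : u = gmul a (gmul b c)) by (unfold u, c; simpl; rewrite (gmul_assoc b); reflexivity).
  rewrite Eu; split.
  - rewrite <- (gmul_1r b) at 1; rewrite <- (gmul_1l (gmul b gone)).
    apply dominated_mul; [exact Ha|].
    apply dominated_mul; [apply dominated_refl | exact Hc].
  - rewrite <- (gmul_1r b) at 1.
    apply dominated_mul; [apply dominated_refl|].
    apply dominated_mul; [apply dominated_refl | exact Hc].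
Qed.

Lemma dominated_one_of_npow_identity b r u c m :
  dominated Phi b u -> dominated Phi r (gnpow u c) ->
  gmul u (gnpow (gmul b r) (S m)) = gnpow u (S c * S m) ->
  dominated Phi gone b.
Proof.
  intros Hb Hr E.
  assert (Hym : dominated Phi (gnpow (gmul b r) m) (gnpow u (S c * m))).
  { rewrite gnpow_mul; apply dominated_npow, dominated_mul; assumption. }
  apply (dominated_mul2l u), (dominated_mul2r (gnpow u (c + S c * m))).
  replace (gmul (gmul u gone) (gnpow u (c + S c * m))) with (gnpow u (S c * S m))
    by (rewrite gmul_1r; replace (S c * S m)%nat with (S (c + S c * m)) by lia; reflexivity).
  rewrite <- E, gnpow_add, <- (gmul_assoc u b), (gmul_assoc b (gnpow u c)).
  change (gnpow (gmul b r) (S m)) with (gmul (gmul b r) (gnpow (gmul b r) m)).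
  apply dominated_mul; [apply dominated_refl|].
  apply dominated_mul; [apply dominated_mul; [apply dominated_refl | exact Hr] | exact Hym].
Qed.

End PointwiseOrder.

Lemma relU_eq {Q : Group} (a b : Q) n k : (k <= n)%nat ->
  relU a b n k = gmul a (gmul (gnpow b (S (n - k))) (gmul a (ginv (gnpow b (n - k))))).
Proof.
  intros Hkn; unfold relU.
  replace (Z.of_nat n - Z.of_nat k + 1)%Z with (Z.of_nat (S (n - k))) by lia.
  replace (- Z.of_nat n + Z.of_nat k)%Z with (- Z.of_nat (n - k))%Z by lia.
  rewrite gzpow_of_nat, gzpow_opp_of_nat; reflexivity.
Qed.

Lemma relW_mul {Q : Group} (a b : Q) n k bb e : (k <= n)%nat -> (1 <= bb)%nat ->
  gmul (relW a b n k bb e) (gmul (gnpow b (S (n - k))) (gnpow (gmul a b) (bb - 1)))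
  = gnpow (relU a b n k) e.
Proof.
  intros Hkn Hbb; unfold relW.
  replace (- Z.of_nat bb + 1)%Z with (- Z.of_nat (bb - 1))%Z by lia.
  replace (- Z.of_nat n + Z.of_nat k - 1)%Z with (- Z.of_nat (S (n - k)))%Z by lia.
  rewrite gzpow_of_nat, !gzpow_opp_of_nat, <- !gmul_assoc.
  rewrite (gmul_assoc (ginv (gnpow b (S (n - k))))), gmul_Vl, gmul_1l, gmul_Vl, gmul_1r.
  reflexivity.
Qed.

Theorem mainTheorem11 (n m k bb e : nat)
  (hn : (2 <= n)%nat) (hk1 : (1 <= k)%nat) (hk2 : (k <= n - 1)%nat)
  (hbe : (bb = 2 * k /\ e = n + k)%nat \/ (bb = 2 * k - 1 /\ e = n + k - 1)%nat)
  (Q : Group) (alpha beta : Q)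
  (hgen : generated_by alpha beta)
  (hrel : satisfies_relation alpha beta n m k bb e)
  (Phi : Q -> R -> R) (hPhi : hom_to_homeo_plus Phi)
  (halpha : forall t : R, Phi alpha t > t) :
  forall t : R, Phi beta t >= t.
Proof.
  destruct hPhi as [Hhomeo Phi_mul].
  assert (Phi_incr : forall x s t, s < t -> Phi x s < Phi x t) by (intro x; apply Hhomeo).
  assert (Hkn : (k <= n)%nat) by lia.
  assert (He : e = S (n - k + (bb - 1))) by lia.
  pose proof (relU_eq alpha beta n k Hkn) as Eu.
  set (p := (n - k)%nat) in *; set (q := (bb - 1)%nat) in *.
  set (u := relU alpha beta n k) in *.
  assert (Hroot : gmul u (gnpow (gmul beta (gmul (gnpow beta p) (gnpow (gmul alpha beta) q))) (S m))
                  = gnpow u (S (p + q) * S m)).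
  { rewrite gmul_assoc, <- He.
    apply mul_npow_of_root with (w := relW alpha beta n k bb e).
    - unfold satisfies_relation in hrel; rewrite <- gzpow_of_nat, Nat2Z.inj_succ; exact hrel.
    - apply relW_mul; lia. }
  assert (Ha : dominated Phi gone alpha)
    by (apply dominated_one_l; auto; intro t; left; apply Rgt_lt, halpha).
  destruct (relator_dominates Q Phi Phi_incr Phi_mul alpha beta p Ha) as [Hb Hab].
  rewrite <- Eu in Hb, Hab.
  assert (Hr : dominated Phi (gmul (gnpow beta p) (gnpow (gmul alpha beta) q)) (gnpow u (p + q)))
    by (rewrite gnpow_add; apply dominated_mul; try apply dominated_npow; assumption).
  intros t; apply Rle_ge; revert t.
  apply (dominated_one_l Q Phi Phi_incr Phi_mul).
  exact (dominated_one_of_npow_identity Q Phi Phi_incr Phi_mul _ _ _ _ _ Hb Hr Hroot).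
Qed.
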